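(* Let $R$ be a commutative Noetherian local ring and let $M,N$ be finitely generated $R$-modules. Suppose $M$ is strongly self dual with respect to $N$. Then $\operatorname{End}_R(M)$ admits an $R^*$-algebra structure such that $M_* \cong \operatorname{Hom}_R(M,N)$ as right $\operatorname{End}_R(M)$-modules, where $\operatorname{Hom}_R(M,N)$ is a right $\operatorname{End}_R(M)$-module via precomposition ($g\cdot f = g\circ f$).
   Context: An $R$-algebra $E$ (possibly noncommutative) is an $R^*$-algebra if there is a map of abelian groups $(-)^*:E\to E$ with $(ab)^*=b^*a^*$, $1_E^*=1_E$, $(ra)^*=ra^*$ for $r\in R$, and $a^{**}=a$ for all $a,b\in E$. If $E$ is an $R^*$-algebra and $M$ is a left $E$-module, $M_*$ denotes $M$ regarded as a right $E$-module via $x\cdot f = f^*x$. $M$ is a left module over $\operatorname{End}_R(M)$ via $f\cdot x=f(x)$. An $R$-module $M$ is strongly self dual with respect to an $R$-module $N$ if there is an $R$-module isomorphism $\alpha:M\to\operatorname{Hom}_R(M,N)$ with $\alpha(x)(y)=\alpha(y)(x)$ for all $x,y\in M$. *)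

From HB Require Import structures.
From mathcomp Require Import all_boot all_order all_algebra.
Set Implicit Arguments.
Unset Strict Implicit.
Unset Printing Implicit Defensive.
Import GRing.Theory.
Local Open Scope ring_scope.

Definition is_ideal (R : comNzRingType) (I : R -> Prop) : Prop :=
  [/\ I 0, (forall x y, I x -> I y -> I (x + y)) & (forall r x, I x -> I (r * x))].

Definition ideal_fg (R : comNzRingType) (I : R -> Prop) : Prop :=
  exists s : seq R, forall x : R,
    I x <-> exists c : 'I_(size s) -> R, x = \sum_(i < size s) c i * s`_i.

Definition noetherian_ring (R : comNzRingType) : Prop :=
  forall I : R -> Prop, is_ideal I -> ideal_fg I.

Definition maximal_ideal (R : comNzRingType) (m : R -> Prop) : Prop :=
  [/\ is_ideal m, ~ m 1 &
      forall J : R -> Prop, is_ideal J -> ~ J 1 ->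
        (forall x, m x -> J x) -> forall x, J x -> m x].

Definition local_ring (R : comNzRingType) : Prop :=
  exists m : R -> Prop, maximal_ideal m /\
    forall m' : R -> Prop, maximal_ideal m' -> forall x, m' x <-> m x.

Definition module_fg (R : comNzRingType) (M : lmodType R) : Prop :=
  exists s : seq M, forall x : M,
    exists c : 'I_(size s) -> R, x = \sum_(i < size s) c i *: s`_i.

Definition R_linear (R : comNzRingType) (M N : lmodType R) (f : M -> N) : Prop :=
  forall (a : R) (x y : M), f (a *: x + y) = a *: f x + f y.

(* M is strongly self dual w.r.t. N: an R-isomorphism alpha : M -> Hom_R(M,N)
   with alpha(x)(y) = alpha(y)(x). *)
Definition strongly_self_dual (R : comNzRingType) (M N : lmodType R) : Prop :=
  exists alpha : M -> M -> N,
    [/\ (forall x, R_linear (alpha x)),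
        (forall (a : R) (x y z : M), alpha (a *: x + y) z = a *: alpha x z + alpha y z),
        (forall x y, (forall z, alpha x z = alpha y z) -> x = y),
        (forall g : M -> N, R_linear g -> exists x, forall z, alpha x z = g z) &
        (forall x y, alpha x y = alpha y x)].

(* An R^*-algebra structure on End_R(M) (elements: R-linear maps M -> M,
   product = composition, unit = identity, R acting by (r f)(x) = r f(x)),
   given by an involution star. *)
Definition Rstar_End (R : comNzRingType) (M : lmodType R)
    (star : (M -> M) -> (M -> M)) : Prop :=
  [/\ (forall f, R_linear f -> R_linear (star f)),
      (forall f g, R_linear f -> R_linear g ->
         star (fun x => f x + g x) = (fun x => star f x + star g x)),
      (forall f g, R_linear f -> R_linear g -> star (f \o g) = star g \o star f),
      star id = id &
      (forall (r : R) f, R_linear f -> star (fun x => r *: f x) = (fun x => r *: star f x))]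
  /\ (forall f, R_linear f -> star (star f) = f).

(* phi : M_* -> Hom_R(M,N) is an isomorphism of right End_R(M)-modules, where
   M_* has action x . f = star f x and Hom_R(M,N) has action g . f = g \o f. *)
Definition right_End_iso (R : comNzRingType) (M N : lmodType R)
    (star : (M -> M) -> (M -> M)) (phi : M -> M -> N) : Prop :=
  [/\ (forall x, R_linear (phi x)),
      (forall x y z, phi (x + y) z = phi x z + phi y z),
      (forall x y, (forall z, phi x z = phi y z) -> x = y),
      (forall g : M -> N, R_linear g -> exists x, forall z, phi x z = g z) &
      (forall f, R_linear f -> forall x z, phi (star f x) z = phi x (f z))].

From mathcomp Require Import all_boot all_order all_algebra.
From Stdlib Require Import ClassicalEpsilon FunctionalExtensionality.
Set Implicit Arguments.
Unset Strict Implicit.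
Unset Printing Implicit Defensive.
Import GRing.Theory.
Local Open Scope ring_scope.

(* The strongly self dual isomorphism alpha : M -> Hom_R(M,N) is a symmetric
   bilinear pairing identifying M with Hom_R(M,N). Every endomorphism f then has
   an adjoint f^* characterised by alpha (f^* x) z = alpha x (f z): the map
   z |-> alpha x (f z) is R-linear, hence of the form alpha y. Uniqueness of
   adjoints makes f |-> f^* additive, R-linear and anti-multiplicative, and
   symmetry of alpha makes it an involution. The defining identity of f^* is
   precisely the statement that alpha : M_* -> Hom_R(M,N) is End_R(M)-linear. *)

Section RLinear.

Variables (R : comNzRingType) (M N P : lmodType R).

Lemma R_linear0 (f : M -> N) : R_linear f -> f 0 = 0.
Proof.
move=> f_lin; have := f_lin 1 0 0; rewrite !scale1r addr0 => f0.
by apply: (@addrI _ (f 0)); rewrite addr0 -f0.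
Qed.

Lemma R_linearD (f : M -> N) : R_linear f -> forall x y, f (x + y) = f x + f y.
Proof. by move=> f_lin x y; have := f_lin 1 x y; rewrite !scale1r. Qed.

Lemma R_linearZ (f : M -> N) : R_linear f -> forall a x, f (a *: x) = a *: f x.
Proof.
by move=> f_lin a x; have := f_lin a x 0; rewrite !addr0 R_linear0 // addr0.
Qed.

Lemma R_linear_comp (f : N -> P) (g : M -> N) :
  R_linear f -> R_linear g -> R_linear (f \o g).
Proof. by move=> f_lin g_lin a x y /=; rewrite g_lin f_lin. Qed.

Lemma R_linear_add (f g : M -> N) :
  R_linear f -> R_linear g -> R_linear (fun x => f x + g x).
Proof.
by move=> f_lin g_lin a x y; rewrite f_lin g_lin scalerDr addrACA.
Qed.

Lemma R_linear_scale (r : R) (f : M -> N) :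
  R_linear f -> R_linear (fun x => r *: f x).
Proof. by move=> f_lin a x y; rewrite f_lin scalerDr !scalerA mulrC. Qed.

End RLinear.

Section Adjoint.

Variables (R : comNzRingType) (M N : lmodType R) (alpha : M -> M -> N).

Hypothesis alpha_linear : forall x, R_linear (alpha x).
Hypothesis alpha_linear_left :
  forall (a : R) (x y z : M), alpha (a *: x + y) z = a *: alpha x z + alpha y z.
Hypothesis alpha_inj : forall x y, (forall z, alpha x z = alpha y z) -> x = y.
Hypothesis alpha_surj :
  forall g : M -> N, R_linear g -> exists x, forall z, alpha x z = g z.

Lemma alphaD x y z : alpha (x + y) z = alpha x z + alpha y z.
Proof. by have := alpha_linear_left 1 x y z; rewrite !scale1r. Qed.

Lemma alphaZ a x z : alpha (a *: x) z = a *: alpha x z.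
Proof.
have alpha0 : alpha 0 z = 0.
  have := alphaD 0 0 z; rewrite addr0 => E.
  by apply: (@addrI _ (alpha 0 z)); rewrite addr0 -E.
by have := alpha_linear_left a x 0 z; rewrite !addr0 alpha0 addr0.
Qed.

Definition adjoint (f : M -> M) (x : M) : M :=
  epsilon (inhabits 0) (fun y => forall z, alpha y z = alpha x (f z)).

Lemma adjointP f : R_linear f -> forall x z, alpha (adjoint f x) z = alpha x (f z).
Proof.
move=> f_lin x; rewrite /adjoint.
apply: (epsilon_spec _ (fun y => forall z, alpha y z = alpha x (f z))).
exact: alpha_surj (R_linear_comp (alpha_linear x) f_lin).
Qed.

Lemma adjoint_eq f g : R_linear f ->
  (forall x z, alpha (g x) z = alpha x (f z)) -> adjoint f = g.
Proof.
move=> f_lin g_adj; apply: functional_extensionality => x.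
by apply: alpha_inj => z; rewrite adjointP // g_adj.
Qed.

Lemma adjoint_linear f : R_linear f -> R_linear (adjoint f).
Proof.
move=> f_lin a x y; apply: alpha_inj => z.
by rewrite adjointP // !alpha_linear_left !adjointP.
Qed.

Lemma adjoint_add f g : R_linear f -> R_linear g ->
  adjoint (fun x => f x + g x) = (fun x => adjoint f x + adjoint g x).
Proof.
move=> f_lin g_lin; apply: adjoint_eq; first exact: R_linear_add.
by move=> x z; rewrite alphaD !adjointP // (R_linearD (alpha_linear x)).
Qed.

Lemma adjoint_comp f g : R_linear f -> R_linear g ->
  adjoint (f \o g) = adjoint g \o adjoint f.
Proof.
move=> f_lin g_lin; apply: adjoint_eq; first exact: R_linear_comp.
by move=> x z /=; rewrite !adjointP.
Qed.

Lemma adjoint_id : adjoint id = id.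
Proof. exact: adjoint_eq. Qed.

Lemma adjoint_scale r f : R_linear f ->
  adjoint (fun x => r *: f x) = (fun x => r *: adjoint f x).
Proof.
move=> f_lin; apply: adjoint_eq; first exact: R_linear_scale.
by move=> x z; rewrite alphaZ adjointP // (R_linearZ (alpha_linear x)).
Qed.

Hypothesis alpha_sym : forall x y, alpha x y = alpha y x.

Lemma adjointK f : R_linear f -> adjoint (adjoint f) = f.
Proof.
move=> f_lin; apply: adjoint_eq; first exact: adjoint_linear.
by move=> x z; rewrite [RHS]alpha_sym adjointP // alpha_sym.
Qed.

Lemma Rstar_End_adjoint : Rstar_End adjoint.
Proof.
split; last exact: adjointK.
split; [exact: adjoint_linear | exact: adjoint_add | exact: adjoint_comp
       | exact: adjoint_id | exact: adjoint_scale].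
Qed.

Lemma right_End_iso_adjoint : right_End_iso adjoint alpha.
Proof.
split; [exact: alpha_linear | exact: alphaD | exact: alpha_inj
       | exact: alpha_surj | exact: adjointP].
Qed.

End Adjoint.

Theorem proposition2p5 (R : comNzRingType) (M N : lmodType R) :
  noetherian_ring R -> local_ring R -> module_fg M -> module_fg N ->
  strongly_self_dual M N ->
  exists star : (M -> M) -> (M -> M),
    Rstar_End star /\ exists phi : M -> M -> N, right_End_iso star phi.
Proof.
move=> _ _ _ _ [alpha [alpha_lin alpha_lin_left alpha_inj alpha_surj alpha_sym]].
exists (adjoint alpha); split; first exact: Rstar_End_adjoint.
exists alpha; exact: right_End_iso_adjoint.
Qed.
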